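(* Let $u=\sum_{i,j=1}^4 q_{i,j}\,e_i\otimes e_j$ be a positive element of $\mathcal V\otimes_{\max}\mathcal V$. For $a,c\in\{0,2\}$ and $j,k\in\{1,2\}$ set $S_{a,c}(j,k)=\min_{b\in\{0,2\}}\sum_{i=1}^2\sqrt{q_{b+i,a+j}}\sqrt{q_{b+i,c+k}}$. Then for each $d\in\{0,2\}$, $\sum_{i,j=1}^2 q_{d+i,d+j}\le\min_{a,c\in\{0,2\}}\sum_{j,k=1}^2 S_{a,c}(j,k)$.
   Context: $e_1,\dots,e_4$ is the standard basis of $\ell^\infty_4$, and $\mathcal V=\{(a,b,c,d)\in\ell^\infty_4: a+b=c+d\}$ is an operator subsystem of $\ell^\infty_4$; elements of $\mathcal V\otimes\mathcal V\subseteq\ell^\infty_4\otimes\ell^\infty_4$ are written uniquely as $\sum q_{i,j}e_i\otimes e_j$ (positive elements have $q_{i,j}\ge0$). $\otimes_{\max}$ is the maximal operator system tensor product, whose cones are the Archimedeanization of $\{A^*(P\otimes Q)A: P\in M_k(\mathcal V)_+, Q\in M_m(\mathcal V)_+, A \text{ scalar}\}$. *)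

(* Scalars: an arbitrary numClosedFieldType C (algebraically
   closed field with conjugation and partial order, e.g. the complex numbers). *)
From HB Require Import structures.
From mathcomp Require Import all_boot all_order all_algebra.
Set Implicit Arguments. Unset Strict Implicit. Unset Printing Implicit Defensive.
Import Order.TTheory GRing.Theory Num.Theory.
Local Open Scope ring_scope.

Definition adjmx (C : numClosedFieldType) (m n : nat) (M : 'M[C]_(m, n)) : 'M[C]_(n, m) :=
  (map_mx Num.conj M)^T.

Definition psdmx (C : numClosedFieldType) (k : nat) (M : 'M[C]_k) : Prop :=
  adjmx M = M /\ forall x : 'cV[C]_k, 0 <= (adjmx x *m M *m x) 0 0.

(* An element of M_k(l^oo_4) is a 4-tuple P (P i = coefficient of e_i) of
   k x k matrices; it is positive iff each P i is psd.  It lies in M_k(V)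
   iff P 0 + P 1 = P 2 + P 3 (i.e. a+b=c+d with 0-based indices). *)
Definition MkV_pos (C : numClosedFieldType) (k : nat) (P : 'I_4 -> 'M[C]_k) : Prop :=
  (forall i, psdmx (P i)) /\ P 0 + P 1 = P 2 + P 3.

(* The set { A^* (P (x) Q) A : P in M_k(V)_+, Q in M_m(V)_+, A in M_{km,1} }
   at matrix level 1.  The column vector A in C^{km} is indexed by pairs
   (r,s) in 'I_k * 'I_m, so it is stored as A : 'M_(k,m); the (i,j)
   coefficient (on e_i (x) e_j) of A^*(P (x) Q)A is A^*(P_i (x) Q_j)A, written
   out with the Kronecker product unfolded. *)
Definition Dmax1 (C : numClosedFieldType) (q : 'M[C]_4) : Prop :=
  exists (k m : nat) (P : 'I_4 -> 'M[C]_k) (Q : 'I_4 -> 'M[C]_m) (A : 'M[C]_(k, m)),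
    MkV_pos P /\ MkV_pos Q /\
    forall i j : 'I_4,
      q i j = \sum_(r < k) \sum_(r' < k) \sum_(s < m) \sum_(s' < m)
                (A r s)^* * (P i r r' * Q j s s') * A r' s'.

(* u = sum q_{ij} e_i (x) e_j is positive in V (x)_max V: Archimedeanization,
   i.e. u + eps (1 (x) 1) lies in the cone above for every eps > 0
   (1 (x) 1 = sum_{i,j} e_i (x) e_j). *)
Definition maxpos (C : numClosedFieldType) (q : 'M[C]_4) : Prop :=
  forall eps : C, 0 < eps -> Dmax1 (q + const_mx eps).

(* block offsets: b = false <-> 0, b = true <-> 2; ix b i = b + i (0-based) *)
Definition ix (b : bool) (i : 'I_2) : 'I_4 := inord ((if b then 2 else 0) + i).

Definition Sac (C : numClosedFieldType) (q : 'M[C]_4) (a c : bool) (j k : 'I_2) : C :=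
  let f b := \sum_(i < 2) sqrtC (q (ix b i) (ix a j)) * sqrtC (q (ix b i) (ix c k)) in
  Num.min (f false) (f true).

From HB Require Import structures.
From mathcomp Require Import all_boot all_order all_algebra.
From mathcomp Require Import sesquilinear spectral ring.
Set Implicit Arguments. Unset Strict Implicit. Unset Printing Implicit Defensive.
Import Order.TTheory GRing.Theory Num.Theory.
Local Open Scope ring_scope.

(* By definition, q + eps J (J the all-ones matrix) has entries
   <A, (P_i (x) Q_j) A> = tr(A^* P_i A Q_j^T) with P, Q positive in M_k(V),
   M_m(V).  For such a "represented" matrix put R = P_1 + P_2 = P_3 + P_4 and
   T = Q_1 + Q_2 = Q_3 + Q_4, so that every diagonal block sums to <R, T>.
   With S = (T + delta)^{-1} one has T S T = T - delta + delta^2 S, hence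
   <R, T> - delta <R, 1> <= <R, T S T>.  Splitting T along the blocks a and c
   writes T S T as the sum of the four Q_{a+j} S Q_{c+k}; splitting R along a
   block b and applying Cauchy-Schwarz to the semi-inner products of the
   P_{b+i}, together with the Schur-complement inequality Q S Q <= Q (valid
   because Q <= T + delta), bounds each term by S_{a,c}(j,k).  Letting
   delta -> 0 proves the theorem for represented matrices; letting eps -> 0,
   using that S_{a,c} moves by O(sqrt eps), proves it for q. *)

Section ConjugateTranspose.
Variable C : numClosedFieldType.

Lemma adjmxM m n p (A : 'M[C]_(m, n)) (B : 'M[C]_(n, p)) :
  adjmx (A *m B) = adjmx B *m adjmx A.
Proof. by rewrite /adjmx map_mxM trmx_mul. Qed.

Lemma adjmxK m n (A : 'M[C]_(m, n)) : adjmx (adjmx A) = A.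
Proof. by apply/matrixP=> i j; rewrite !mxE conjCK. Qed.

Lemma adjmxD m n (A B : 'M[C]_(m, n)) : adjmx (A + B) = adjmx A + adjmx B.
Proof. by apply/matrixP=> i j; rewrite !mxE rmorphD. Qed.

Lemma adjmxB m n (A B : 'M[C]_(m, n)) : adjmx (A - B) = adjmx A - adjmx B.
Proof. by apply/matrixP=> i j; rewrite !mxE rmorphB. Qed.

Lemma adjmx_scalar n a : adjmx (a%:M : 'M[C]_n) = a^*%:M.
Proof. by apply/matrixP=> i j; rewrite !mxE eq_sym rmorphMn. Qed.

Lemma adjmx_diag n (l : 'rV[C]_n) : adjmx (diag_mx l) = diag_mx (map_mx Num.conj l).
Proof. by apply/matrixP=> i j; rewrite !mxE rmorphMn eq_sym; case: eqVneq => // ->. Qed.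

Lemma adjmx_trace n (M : 'M[C]_n) : \tr (adjmx M) = (\tr M)^*.
Proof. by rewrite /adjmx mxtrace_tr /mxtrace rmorph_sum; apply: eq_bigr => i _; rewrite mxE. Qed.

Lemma adjmx_col_adj m n (W : 'M[C]_(m, n)) i : adjmx (col i (adjmx W)) = row i W.
Proof. by apply/matrixP=> a b; rewrite !mxE conjCK. Qed.

End ConjugateTranspose.

Lemma mulmx_entry (R : pzRingType) m n p (A : 'M[R]_(m, n)) (B : 'M[R]_(n, p)) i j :
  (A *m B) i j = (row i A *m col j B) 0 0.
Proof. by rewrite !mxE; apply: eq_bigr => k _; rewrite !mxE. Qed.

Lemma diag_mulmx (R : comPzRingType) n (f g : 'rV[R]_n) :
  diag_mx f *m diag_mx g = diag_mx (\row_i (f 0 i * g 0 i)).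
Proof.
apply/matrixP=> i j; rewrite mul_diag_mx !mxE.
by case: eqVneq => [->|_]; rewrite ?mulr0n ?mulr0 // !mulr1n.
Qed.

Section PositiveSemidefinite.
Variable C : numClosedFieldType.

Lemma psdmxD n (M N : 'M[C]_n) : psdmx M -> psdmx N -> psdmx (M + N).
Proof.
move=> [hM pM] [hN pN]; split; first by rewrite adjmxD hM hN.
by move=> x; rewrite mulmxDr mulmxDl mxE addr_ge0.
Qed.

Lemma psdmx_scalar n (d : C) : 0 <= d -> psdmx (d%:M : 'M[C]_n).
Proof.
move=> d0; split; first by rewrite adjmx_scalar; have /CrealP -> := ger0_real d0.
move=> x; rewrite mul_mx_scalar -scalemxAl !mxE mulr_ge0 //.
by apply: sumr_ge0 => j _; rewrite !mxE mulrC mul_conjC_ge0.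
Qed.

(* The diagonal entries of W M W^* are values of the quadratic form of M. *)
Lemma psdmx_conj_diag_ge0 p n (M : 'M[C]_n) (W : 'M[C]_(p, n)) i :
  psdmx M -> 0 <= (W *m M *m adjmx W) i i.
Proof.
move=> [_ hpos]; have := hpos (col i (adjmx W)).
by rewrite adjmx_col_adj -row_mul -mulmx_entry.
Qed.

Lemma hermitian_spectral n (M : 'M[C]_n) : adjmx M = M ->
  exists (V : 'M[C]_n) (l : 'rV[C]_n),
    [/\ adjmx V *m V = 1%:M, V *m adjmx V = 1%:M & M = adjmx V *m diag_mx l *m V].
Proof.
move=> hM.
have /orthomx_spectralP E : M \is normalmx.
  by apply/hermitian_normalmx/is_hermitianmxP; rewrite expr0 scale1r -[LHS]hM /adjmx map_trmx.
have Pu := spectral_unitarymx M.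
have iP : invmx (spectralmx M) = adjmx (spectralmx M).
  by rewrite invmx_unitary // /adjmx map_trmx.
exists (spectralmx M), (spectral_diag M).
by rewrite -iP mulVmx ?mulmxV ?unitarymx_unit // -E.
Qed.

Lemma psd_spectral n (M : 'M[C]_n) : psdmx M ->
  exists (V : 'M[C]_n) (l : 'rV[C]_n),
    [/\ adjmx V *m V = 1%:M, V *m adjmx V = 1%:M, (forall i, 0 <= l 0 i)
      & M = adjmx V *m diag_mx l *m V].
Proof.
move=> hM; have [V [l [VV VV' E]]] := hermitian_spectral (proj1 hM).
exists V, l; split=> // i; have := psdmx_conj_diag_ge0 V i hM.
by rewrite E !mulmxA VV' mul1mx -mulmxA VV' mulmx1 mxE eqxx mulr1n.
Qed.

Lemma conj_diag_gram n (V : 'M[C]_n) (l : 'rV[C]_n) : (forall i, 0 <= l 0 i) ->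
  let Y := diag_mx (map_mx sqrtC l) *m V in adjmx V *m diag_mx l *m V = adjmx Y *m Y.
Proof.
move=> l0 Y; rewrite /Y adjmxM adjmx_diag -!mulmxA; congr (_ *m _).
rewrite !mulmxA; congr (_ *m _); rewrite diag_mulmx; congr diag_mx.
apply/rowP=> i; rewrite !mxE.
by have /CrealP -> := sqrtC_real (l0 i); rewrite -expr2 sqrtCK.
Qed.

Lemma psd_factor n (M : 'M[C]_n) : psdmx M -> exists Y : 'M[C]_n, adjmx Y *m Y = M.
Proof.
move=> /psd_spectral [V [l [_ _ l0 ->]]].
by exists (diag_mx (map_mx sqrtC l) *m V); rewrite -conj_diag_gram.
Qed.

Lemma conj_diag_mul n (V : 'M[C]_n) (f g : 'rV[C]_n) : V *m adjmx V = 1%:M ->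
  (adjmx V *m diag_mx f *m V) *m (adjmx V *m diag_mx g *m V)
    = adjmx V *m diag_mx (\row_i (f 0 i * g 0 i)) *m V.
Proof.
by move=> VV'; rewrite !mulmxA -[_ *m V *m adjmx V]mulmxA VV' mulmx1 -diag_mulmx !mulmxA.
Qed.

Lemma shifted_inverse n (T : 'M[C]_n) (d : C) : psdmx T -> 0 < d ->
  exists Sg : 'M[C]_n,
    adjmx Sg *m Sg *m (T + d%:M) = 1%:M /\ (T + d%:M) *m (adjmx Sg *m Sg) = 1%:M.
Proof.
move=> /psd_spectral [V [l [VV VV' l0 ET]]] d0.
pose ld := \row_i (l 0 i + d); pose g := \row_i (l 0 i + d)^-1.
have ld0 i : l 0 i + d != 0 by rewrite lt0r_neq0 // ltr_wpDl.
have g0 i : 0 <= g 0 i by rewrite !mxE invr_ge0 addr_ge0 // ltW.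
have EU : T + d%:M = adjmx V *m diag_mx ld *m V.
  have -> : d%:M = adjmx V *m diag_mx (const_mx d) *m V.
    by rewrite diag_const_mx mul_mx_scalar -scalemxAl VV scalemx1.
  rewrite ET -mulmxDl -mulmxDr -linearD /=; do 2!congr mulmx; congr diag_mx.
  by apply/rowP=> i; rewrite !mxE.
exists (diag_mx (map_mx sqrtC g) *m V); rewrite -conj_diag_gram // EU.
rewrite !conj_diag_mul //; split; rewrite -VV -[X in _ = X *m _]mulmx1 -diag_const_mx;
  do 2!congr mulmx; congr diag_mx; apply/rowP=> i; by rewrite !mxE ?mulVf ?mulfV.
Qed.

End PositiveSemidefinite.

Section SemiInnerProduct.
Variables (C : numClosedFieldType) (V : lmodType C) (f : V -> V -> C).
Hypothesis f_linear : forall x y z a, f x (a *: y + z) = a * f x y + f x z.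
Hypothesis f_herm : forall x y, f y x = (f x y)^*.
Hypothesis f_ge0 : forall x, 0 <= f x x.

Lemma semi_form_expand x y a : f (x + a *: y) (x + a *: y) =
  f x x + a * f x y + a^* * (f x y)^* + a^* * a * f y y.
Proof.
have fDr u v w : f u (v + w) = f u v + f u w.
  by rewrite -{1}[v]scale1r f_linear mul1r.
have f0r u : f u 0 = 0.
  by have := f_linear u 0 0 1; rewrite scaler0 addr0 mul1r -{1}[f u 0]addr0 => /addrI <-.
have fZr u v b : f u (b *: v) = b * f u v by rewrite -[b *: v]addr0 f_linear f0r addr0.
have fDl u v w : f (u + v) w = f u w + f v w by rewrite (f_herm w) fDr rmorphD /= -!f_herm.
have fZl u v b : f (b *: u) v = b^* * f u v by rewrite (f_herm v) fZr rmorphM /= -f_herm.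
by rewrite fDl !fDr !fZl !fZr -(f_herm x y); ring.
Qed.

(* Positivity along the real line x - s b^* y, with b = f x y. *)
Lemma semi_form_line_ge0 x y s : s \is Num.real ->
  0 <= f x x - s *+ 2 * `|f x y| ^+ 2 + s ^+ 2 * `|f x y| ^+ 2 * f y y.
Proof.
move=> /CrealP sr; have := f_ge0 (x + (- ((f x y)^* * s)) *: y).
rewrite semi_form_expand normCK !rmorphN /= !rmorphM /= conjCK sr.
by set b := f x y; set X := f x x; set Y := f y y; congr (_ <= _); ring.
Qed.

Lemma semi_CauchySchwarz x y : `|f x y| ^+ 2 <= f x x * f y y.
Proof.
set b2 := `|f x y| ^+ 2; set X := f x x; set Y := f y y.
have X0 : 0 <= X := f_ge0 x; have Y0 : 0 <= Y := f_ge0 y.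
have b20 : 0 <= b2 by rewrite exprn_ge0.
have [Yeq0|Yneq0] := eqVneq Y 0.
  rewrite Yeq0 mulr0; have [->//|b2neq0] := eqVneq b2 0.
  have b2pos : 0 < b2 by rewrite lt_def b2neq0 b20.
  have sr : (X + 1) / (b2 *+ 2) \is Num.real.
    by apply: ger0_real; rewrite divr_ge0 ?addr_ge0 ?mulrn_wge0.
  have := semi_form_line_ge0 x y sr; rewrite -/X -/Y -/b2 Yeq0 mulr0 addr0.
  have -> : (X + 1) / (b2 *+ 2) *+ 2 * b2 = X + 1 by field; rewrite lt0r_neq0.
  by rewrite opprD addrA subrr sub0r oppr_ge0 ler10.
have Ypos : 0 < Y by rewrite lt_def Yneq0 Y0.
have Yinv_real : Y^-1 \is Num.real by rewrite ger0_real // invr_ge0 ltW.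
have := semi_form_line_ge0 x y Yinv_real; rewrite -/X -/Y -/b2.
have -> : X - Y^-1 *+ 2 * b2 + Y^-1 ^+ 2 * b2 * Y = X - b2 / Y.
  by field; rewrite lt0r_neq0.
by rewrite subr_ge0 ler_pdivrMr // mulrC.
Qed.

Lemma semi_CauchySchwarz_sqrt x y : `|f x y| <= sqrtC (f x x) * sqrtC (f y y).
Proof.
rewrite -(sqrCK (normr_ge0 (f x y))) -sqrtCM ?qualifE /= ?f_ge0 //.
by rewrite ler_sqrtC ?qualifE /= ?exprn_ge0 ?mulr_ge0 ?f_ge0 // semi_CauchySchwarz.
Qed.

End SemiInnerProduct.

Definition sesq (C : numClosedFieldType) k n (P : 'M[C]_k) (x y : 'M[C]_(k, n)) : C :=
  \tr (adjmx x *m P *m y).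

(* The coefficient <A, (P (x) Z) A> of A^* (P (x) Z) A, written as a trace. *)
Definition pairing (C : numClosedFieldType) k m (A : 'M[C]_(k, m)) (P : 'M[C]_k)
  (Z : 'M[C]_m) : C := \tr (adjmx A *m P *m A *m Z^T).

Section TraceForms.
Variable C : numClosedFieldType.

Lemma sesq_linear k n (P : 'M[C]_k) (x y z : 'M[C]_(k, n)) a :
  sesq P x (a *: y + z) = a * sesq P x y + sesq P x z.
Proof. by rewrite /sesq mulmxDr -scalemxAr mxtraceD mxtraceZ. Qed.

Lemma sesq_herm k n (P : 'M[C]_k) (x y : 'M[C]_(k, n)) : adjmx P = P ->
  sesq P y x = (sesq P x y)^*.
Proof. by move=> hP; rewrite /sesq -adjmx_trace !adjmxM adjmxK hP mulmxA. Qed.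

Lemma sesq_ge0 k n (P : 'M[C]_k) (x : 'M[C]_(k, n)) : psdmx P -> 0 <= sesq P x x.
Proof.
move=> [_ hP]; rewrite /sesq /mxtrace; apply: sumr_ge0 => t _.
by rewrite mulmx_entry row_mul -[row t _]adjmx_col_adj adjmxK; apply: hP.
Qed.

Lemma sesqDl k n (P1 P2 : 'M[C]_k) (x y : 'M[C]_(k, n)) :
  sesq (P1 + P2) x y = sesq P1 x y + sesq P2 x y.
Proof. by rewrite /sesq mulmxDr mulmxDl mxtraceD. Qed.

Lemma sesq_CauchySchwarz k n (P : 'M[C]_k) (x y : 'M[C]_(k, n)) : psdmx P ->
  `|sesq P x y| ^+ 2 <= sesq P x x * sesq P y y.
Proof.
move=> hP; apply: (@semi_CauchySchwarz C 'M[C]_(k, n) (sesq P)) => *.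
- exact: sesq_linear.
- exact: sesq_herm (proj1 hP).
- exact: sesq_ge0.
Qed.

Lemma sesq_CauchySchwarz_sqrt k n (P : 'M[C]_k) (x y : 'M[C]_(k, n)) : psdmx P ->
  `|sesq P x y| <= sqrtC (sesq P x x) * sqrtC (sesq P y y).
Proof.
move=> hP; apply: (@semi_CauchySchwarz_sqrt C 'M[C]_(k, n) (sesq P)) => *.
- exact: sesq_linear.
- exact: sesq_herm (proj1 hP).
- exact: sesq_ge0.
Qed.

Lemma sum4_perm (V : nmodType) k m (F : 'I_k -> 'I_k -> 'I_m -> 'I_m -> V) :
  \sum_(a < k) \sum_(b < k) \sum_(c < m) \sum_(d < m) F a b c d =
  \sum_(c < m) \sum_(d < m) \sum_(b < k) \sum_(a < k) F a b c d.
Proof.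
rewrite exchange_big /=; under eq_bigr => b _ do rewrite exchange_big /=.
rewrite exchange_big /=; apply: eq_bigr => c _.
under eq_bigr => b _ do rewrite exchange_big /=.
by rewrite exchange_big /=; apply: eq_bigr => d _; rewrite exchange_big.
Qed.

Lemma pairing_expand k m (A : 'M[C]_(k, m)) P Z :
  pairing A P Z = \sum_(r < k) \sum_(r' < k) \sum_(s < m) \sum_(s' < m)
                    (A r s)^* * (P r r' * Z s s') * A r' s'.
Proof.
rewrite sum4_perm /pairing /mxtrace; apply: eq_bigr => s _; rewrite mxE.
apply: eq_bigr => s' _; rewrite !mxE big_distrl /=.
apply: eq_bigr => r' _; rewrite !mxE !big_distrl /=.
by apply: eq_bigr => r _; rewrite !mxE; ring.
Qed.

Lemma pairingDl k m (A : 'M[C]_(k, m)) P1 P2 Z :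
  pairing A (P1 + P2) Z = pairing A P1 Z + pairing A P2 Z.
Proof. by rewrite /pairing mulmxDr !mulmxDl mxtraceD. Qed.

Lemma pairingDr k m (A : 'M[C]_(k, m)) P Z1 Z2 :
  pairing A P (Z1 + Z2) = pairing A P Z1 + pairing A P Z2.
Proof. by rewrite /pairing linearD /= mulmxDr mxtraceD. Qed.

Lemma pairingBr k m (A : 'M[C]_(k, m)) P Z1 Z2 :
  pairing A P (Z1 - Z2) = pairing A P Z1 - pairing A P Z2.
Proof. by rewrite /pairing linearB /= mulmxBr linearB. Qed.

Lemma pairingZr k m (A : 'M[C]_(k, m)) P Z a : pairing A P (a *: Z) = a * pairing A P Z.
Proof. by rewrite /pairing linearZ /= -scalemxAr mxtraceZ. Qed.

Lemma pairing_suml k m (A : 'M[C]_(k, m)) (I : Type) (r : seq I) (F : I -> 'M[C]_k) Z :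
  pairing A (\sum_(i <- r) F i) Z = \sum_(i <- r) pairing A (F i) Z.
Proof.
apply: (big_morph (pairing A ^~ Z) (fun P1 P2 => pairingDl A P1 P2 Z)).
by rewrite /pairing mulmx0 !mul0mx mxtrace0.
Qed.

Lemma pairing_sumr k m (A : 'M[C]_(k, m)) (I : Type) (r : seq I) P (F : I -> 'M[C]_m) :
  pairing A P (\sum_(i <- r) F i) = \sum_(i <- r) pairing A P (F i).
Proof.
apply: (big_morph (pairing A P) (pairingDr A P)).
by rewrite /pairing trmx0 mulmx0 mxtrace0.
Qed.

Lemma pairing_gram k m n (A : 'M[C]_(k, m)) P (Y Y' : 'M[C]_(n, m)) :
  pairing A P (adjmx Y *m Y') = sesq P (A *m Y^T) (A *m Y'^T).
Proof.
rewrite /pairing /sesq adjmxM trmx_mul.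
have -> : adjmx (Y^T) = map_mx Num.conj Y by apply/matrixP=> i j; rewrite !mxE.
have -> : (adjmx Y)^T = map_mx Num.conj Y by apply/matrixP=> i j; rewrite !mxE.
by rewrite !mulmxA mxtrace_mulC !mulmxA.
Qed.

Lemma pairing_ge0 k m (A : 'M[C]_(k, m)) P Z : psdmx P -> psdmx Z -> 0 <= pairing A P Z.
Proof. by move=> hP /psd_factor [Y <-]; rewrite pairing_gram; apply: sesq_ge0. Qed.

End TraceForms.

Lemma schur_complement_psd (C : numClosedFieldType) n (Q U Sg : 'M[C]_n) :
  psdmx Q -> psdmx (U - Q) -> adjmx Sg *m Sg *m U = 1%:M ->
  psdmx (Q - Q *m (adjmx Sg *m Sg) *m Q).
Proof.
move=> hQ hUQ SU; set S := adjmx Sg *m Sg in SU *.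
have hU : psdmx U by rewrite -(subrK Q U); apply: psdmxD.
split; first by rewrite adjmxB !adjmxM adjmxK (proj1 hQ) !mulmxA.
move=> x; set u := S *m Q *m x; set s := sesq Q x u.
have tr1 (M : 'M[C]_1) : \tr M = M 0 0 by rewrite /mxtrace big_ord1.
have -> : (adjmx x *m (Q - Q *m S *m Q) *m x) 0 0 = sesq Q x x - s.
  by rewrite /s /u /sesq !tr1 mulmxBr mulmxBl !mulmxA [LHS]mxE [X in _ + X]mxE.
have sU_eq : sesq U u u = s.
  rewrite /s /u /sesq !adjmxM adjmxK (proj1 hQ) -!mulmxA.
  by congr (\tr (_ *m (_ *m _))); rewrite !mulmxA SU mul1mx.
have s0 : 0 <= s by rewrite -sU_eq sesq_ge0.
have sQ_le : sesq Q u u <= s.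
  by rewrite -sU_eq -(subrK Q U) sesqDl lerDr sesq_ge0.
have CS := sesq_CauchySchwarz x u hQ; rewrite -/s ger0_norm // in CS.
rewrite subr_ge0; have [->|s_neq0] := eqVneq s 0; first exact: sesq_ge0.
have s_pos : 0 < s by rewrite lt_def s_neq0 s0.
rewrite -(ler_pM2r s_pos) -expr2; apply: (le_trans CS).
by rewrite ler_wpM2l // sesq_ge0.
Qed.

Lemma le_of_le_sub_eps (C : numClosedFieldType) (L R K : C) :
  L \is Num.real -> R \is Num.real -> 0 <= K ->
  (forall d, 0 < d -> d <= 1 -> L - d * K <= R) -> L <= R.
Proof.
move=> Lr Rr K0 hd; rewrite real_leNgt //; apply/negP => RL.
set g := L - R; have g0 : 0 < g by rewrite subr_gt0.
have N0 : 0 < K + 1 + g by rewrite addr_gt0 // ltr_wpDl // ltr01.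
have d0 : 0 < g / (K + 1 + g) by rewrite divr_gt0.
have d1 : g / (K + 1 + g) <= 1 by rewrite ler_pdivrMr // mul1r lerDr addr_ge0.
have dK : g / (K + 1 + g) * K < g.
  by rewrite mulrAC ltr_pdivrMr // -addrA mulrDr ltrDl mulr_gt0 // addr_gt0.
have := hd _ d0 d1; rewrite lerBlDr -lerBlDl => /le_lt_trans /(_ dK).
by rewrite ltxx.
Qed.

Lemma block_sum (V : zmodType) (f : 'I_4 -> V) : f 0 + f 1 = f 2 + f 3 ->
  forall b, \sum_(i < 2) f (ix b i) = f 0 + f 1.
Proof.
move=> h b; rewrite big_ord_recl big_ord1 /ix.
by case: b; first rewrite h; congr (f _ + f _); apply/val_inj; rewrite /= inordK.
Qed.

Lemma block_complement (V : zmodType) (f : 'I_4 -> V) : f 0 + f 1 = f 2 + f 3 ->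
  forall b j, exists j', f (ix b j) + f j' = f 0 + f 1.
Proof.
move=> h b j; rewrite -(block_sum h b) big_ord_recl big_ord1.
case: j => [[|[|//]]] p.
  by exists (ix b (lift ord0 ord0)); congr (f (ix b _) + _); apply/val_inj.
by exists (ix b ord0); rewrite addrC; congr (_ + f (ix b _)); apply/val_inj.
Qed.

Lemma pairing_compress_le (C : numClosedFieldType) k m (A : 'M[C]_(k, m))
    (X : 'M[C]_k) (Z U Sg : 'M[C]_m) :
  psdmx X -> psdmx Z -> psdmx (U - Z) -> adjmx Sg *m Sg *m U = 1%:M ->
  sesq X (A *m (Sg *m Z)^T) (A *m (Sg *m Z)^T) <= pairing A X Z.
Proof.
move=> hX hZ hUZ SU; rewrite -pairing_gram -subr_ge0 -pairingBr.
rewrite adjmxM (proj1 hZ) mulmxA; apply: pairing_ge0 => //.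
by rewrite -[Z *m _ *m Sg]mulmxA; exact: schur_complement_psd hZ hUZ SU.
Qed.

Section RepresentedBound.
Variables (C : numClosedFieldType) (k m : nat).
Variables (P : 'I_4 -> 'M[C]_k) (Q : 'I_4 -> 'M[C]_m) (A : 'M[C]_(k, m)).
Hypotheses (hP : MkV_pos P) (hQ : MkV_pos Q).

Let R := P 0 + P 1.
Let T := Q 0 + Q 1.
Let q' := \matrix_(i, j) pairing A (P i) (Q j).

Lemma represented_ge0 i j : 0 <= q' i j.
Proof. by rewrite mxE pairing_ge0 //; [apply: (proj1 hP)|apply: (proj1 hQ)]. Qed.

Lemma psdR : psdmx R.
Proof. by apply: psdmxD; apply: (proj1 hP). Qed.

Lemma psdT : psdmx T.
Proof. by apply: psdmxD; apply: (proj1 hQ). Qed.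

Lemma represented_block_sum d :
  \sum_(i < 2) \sum_(j < 2) q' (ix d i) (ix d j) = pairing A R T.
Proof.
under eq_bigr => i _ do under eq_bigr => j _ do rewrite mxE.
under eq_bigr => i _ do rewrite -pairing_sumr (block_sum (proj2 hQ)).
by rewrite -pairing_suml (block_sum (proj2 hP)).
Qed.

Variables (dl : C) (Sg : 'M[C]_m).
Hypotheses (dl_gt0 : 0 < dl) (SgU : adjmx Sg *m Sg *m (T + dl%:M) = 1%:M)
  (USg : (T + dl%:M) *m (adjmx Sg *m Sg) = 1%:M).
Let S := adjmx Sg *m Sg.

Lemma shifted_dominates b j : psdmx (T + dl%:M - Q (ix b j)).
Proof.
have [j' Ej'] := block_complement (proj2 hQ) b j.
rewrite /T -Ej' addrAC [Q _ + _]addrC addrK; apply: psdmxD; first exact: (proj1 hQ).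
exact/psdmx_scalar/ltW.
Qed.

(* Cauchy–Schwarz in each P_{b+i} bounds a single term by S_{a,c}(j,l). *)
Lemma represented_term_bound a c j l :
  `|pairing A R (Q (ix a j) *m S *m Q (ix c l))| <= Sac q' a c j l.
Proof.
pose eta b j0 := A *m (Sg *m Q (ix b j0))^T.
have compress (X : 'M[C]_k) b j0 : psdmx X ->
    sqrtC (sesq X (eta b j0) (eta b j0)) <= sqrtC (pairing A X (Q (ix b j0))).
  move=> hX; have hQb := proj1 hQ (ix b j0).
  rewrite ler_sqrtC ?qualifE /= ?sesq_ge0 ?pairing_ge0 //.
  exact: pairing_compress_le hX hQb (shifted_dominates b j0) SgU.
have term_b b : `|pairing A R (Q (ix a j) *m S *m Q (ix c l))| <=
    \sum_(i < 2) sqrtC (q' (ix b i) (ix a j)) * sqrtC (q' (ix b i) (ix c l)).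
  rewrite /R -(block_sum (proj2 hP) b) pairing_suml.
  apply: (le_trans (ler_norm_sum _ _ _)); apply: ler_sum => i _.
  have hPi : psdmx (P (ix b i)) := proj1 hP _.
  have -> : Q (ix a j) *m S *m Q (ix c l) = adjmx (Sg *m Q (ix a j)) *m (Sg *m Q (ix c l)).
    by rewrite adjmxM (proj1 (proj1 hQ _)) /S !mulmxA.
  rewrite pairing_gram; apply: (le_trans (sesq_CauchySchwarz_sqrt _ _ hPi)).
  by rewrite !mxE; apply: ler_pM; rewrite ?sqrtC_ge0 ?sesq_ge0 ?compress.
have term_real b : \sum_(i < 2) sqrtC (q' (ix b i) (ix a j)) * sqrtC (q' (ix b i) (ix c l))
    \is Num.real.
  by apply: ger0_real; apply: sumr_ge0 => i _; rewrite mulr_ge0 ?sqrtC_ge0 ?represented_ge0.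
by rewrite /Sac /= comparable_le_min ?real_comparable ?term_b.
Qed.

Lemma shifted_inverse_sandwich : T *m S *m T = T - dl%:M + (dl ^+ 2) *: S.
Proof.
have eT : T = (T + dl%:M) - dl%:M by rewrite addrK.
rewrite {1}eT mulmxBl USg mul_scalar_mx [in LHS]eT mulmxBr !mulmxBl mul1mx.
rewrite -scalemxAl SgU !mul_mx_scalar scalerA.
by apply/matrixP => i j; rewrite !mxE; ring.
Qed.

(* <R, T> - dl <R, 1> <= <R, T S T>, and splitting T S T along the blocks
   a and c bounds the right-hand side by the S_{a,c}. *)
Lemma represented_sum_bound a c :
  pairing A R T - dl * pairing A R 1%:M <= \sum_(j < 2) \sum_(l < 2) Sac q' a c j l.
Proof.
have hR := psdR.
have TST_gram : T *m S *m T = adjmx (Sg *m T) *m (Sg *m T).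
  by rewrite adjmxM (proj1 psdT) /S !mulmxA.
have TST_ge0 : 0 <= pairing A R (T *m S *m T) by rewrite TST_gram pairing_gram; apply: sesq_ge0.
apply: (@le_trans _ _ (pairing A R (T *m S *m T))).
  rewrite shifted_inverse_sandwich pairingDr pairingBr pairingZr -(scalemx1 m dl).
  rewrite pairingZr lerDl mulr_ge0 ?exprn_ge0 ?(ltW dl_gt0) //.
  by rewrite /S pairing_gram; apply: sesq_ge0.
have split_TST : T *m S *m T = \sum_(j < 2) \sum_(l < 2) Q (ix a j) *m S *m Q (ix c l).
  rewrite /T -{1}(block_sum (proj2 hQ) a) -(block_sum (proj2 hQ) c) !mulmx_suml.
  by apply: eq_bigr => j _; rewrite mulmx_sumr.
rewrite -(ger0_norm TST_ge0) split_TST pairing_sumr.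
apply: (le_trans (ler_norm_sum _ _ _)); apply: ler_sum => j _; rewrite pairing_sumr.
apply: (le_trans (ler_norm_sum _ _ _)); apply: ler_sum => l _.
exact: represented_term_bound.
Qed.

End RepresentedBound.

Definition diag_block_sum (C : numClosedFieldType) (q : 'M[C]_4) (d : bool) : C :=
  \sum_(i < 2) \sum_(j < 2) q (ix d i) (ix d j).

Definition Sac_sum (C : numClosedFieldType) (q : 'M[C]_4) (a c : bool) : C :=
  \sum_(j < 2) \sum_(k < 2) Sac q a c j k.

Section SacBasics.
Variable C : numClosedFieldType.
Implicit Types q : 'M[C]_4.

Lemma Sac_term_ge0 q a c j l b : (forall i j, 0 <= q i j) ->
  0 <= \sum_(i < 2) sqrtC (q (ix b i) (ix a j)) * sqrtC (q (ix b i) (ix c l)).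
Proof. by move=> q0; apply: sumr_ge0 => i _; rewrite mulr_ge0 ?sqrtC_ge0. Qed.

Lemma Sac_ge0 q a c j l : (forall i j, 0 <= q i j) -> 0 <= Sac q a c j l.
Proof.
move=> q0; rewrite /Sac /= comparable_le_min ?real_comparable ?ger0_real ?Sac_term_ge0 //.
Qed.

Lemma Sac_sum_ge0 q a c : (forall i j, 0 <= q i j) -> 0 <= Sac_sum q a c.
Proof. by move=> q0; do 2!(apply: sumr_ge0 => ? _); apply: Sac_ge0. Qed.

End SacBasics.

(* The theorem for matrices of the exact form A^* (P (x) Q) A, with P, Q
   positive in M_k(V), M_m(V): let the shift dl of T go to 0. *)
Lemma represented_bound (C : numClosedFieldType) k m (P : 'I_4 -> 'M[C]_k)
    (Q : 'I_4 -> 'M[C]_m) (A : 'M[C]_(k, m)) :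
  MkV_pos P -> MkV_pos Q -> forall d a c,
  diag_block_sum (\matrix_(i, j) pairing A (P i) (Q j)) d
    <= Sac_sum (\matrix_(i, j) pairing A (P i) (Q j)) a c.
Proof.
move=> hP hQ d a c; rewrite /diag_block_sum represented_block_sum //.
have RT0 := pairing_ge0 A (psdR hP) (psdT hQ).
have R10 := pairing_ge0 A (psdR hP) (psdmx_scalar m ler01).
have RHS0 := Sac_sum_ge0 a c (represented_ge0 A hP hQ).
apply: (le_of_le_sub_eps (ger0_real RT0) (ger0_real RHS0) R10) => dl dl0 _.
have [Sg [SgU USg]] := shifted_inverse (psdT hQ) dl0.
rewrite /Sac_sum; exact: (represented_sum_bound A hP hQ dl0 SgU USg a c).
Qed.

Lemma Dmax1_represented (C : numClosedFieldType) (q : 'M[C]_4) : Dmax1 q ->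
  exists k m (P : 'I_4 -> 'M[C]_k) (Q : 'I_4 -> 'M[C]_m) (A : 'M[C]_(k, m)),
    [/\ MkV_pos P, MkV_pos Q & q = \matrix_(i, j) pairing A (P i) (Q j)].
Proof.
move=> [k [m [P [Q [A [hP [hQ Eq]]]]]]]; exists k, m, P, Q, A; split=> //.
by apply/matrixP=> i j; rewrite Eq mxE pairing_expand.
Qed.

Lemma ge0_of_approx (C : numClosedFieldType) (x : C) :
  (forall e, 0 < e -> 0 <= x + e) -> 0 <= x.
Proof.
move=> hx; have xr : x \is Num.real.
  by have := rpredB (ger0_real (hx 1 ltr01)) (ger0_real ler01); rewrite addrK.
apply: (le_of_le_sub_eps (ger0_real (lexx 0)) xr ler01) => e e0 _.
by rewrite sub0r mulr1 -subr_ge0 opprK hx.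
Qed.

Lemma maxpos_ge0 (C : numClosedFieldType) (q : 'M[C]_4) :
  maxpos q -> forall i j, 0 <= q i j.
Proof.
move=> hq i j; apply: ge0_of_approx => e e0.
have [k [m [P [Q [A [hP hQ Eq]]]]]] := Dmax1_represented (hq e e0).
by have := represented_ge0 A hP hQ i j; rewrite -Eq !mxE.
Qed.

Lemma maxpos_shift_bound (C : numClosedFieldType) (q : 'M[C]_4) e : maxpos q -> 0 < e ->
  forall d a c, diag_block_sum (q + const_mx e) d <= Sac_sum (q + const_mx e) a c.
Proof.
move=> hq e0; have [k [m [P [Q [A [hP hQ ->]]]]]] := Dmax1_represented (hq e e0).
exact: represented_bound.
Qed.

Section SacShift.
Variable C : numClosedFieldType.

Lemma sqrtC_addr_le (x e : C) : 0 <= x -> 0 <= e -> sqrtC (x + e) <= sqrtC x + sqrtC e.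
Proof.
move=> x0 e0; have s0 : 0 <= sqrtC x + sqrtC e by rewrite addr_ge0 // sqrtC_ge0.
rewrite -(sqrCK s0) ler_sqrtC ?qualifE /= ?addr_ge0 ?exprn_ge0 //.
by rewrite sqrrD !sqrtCK lerD2r lerDl mulrn_wge0 // mulr_ge0 // sqrtC_ge0.
Qed.

Lemma sqrtC_prod_shift_le (x y dl : C) : 0 <= x -> 0 <= y -> 0 <= dl -> dl <= 1 ->
  sqrtC (x + dl ^+ 2) * sqrtC (y + dl ^+ 2)
    <= sqrtC x * sqrtC y + dl * (sqrtC x + sqrtC y + 1).
Proof.
move=> x0 y0 dl0 dl1; have dl20 : 0 <= dl ^+ 2 by rewrite exprn_ge0.
have sqrt_shift z : 0 <= z -> sqrtC (z + dl ^+ 2) <= sqrtC z + dl.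
  by move=> z0; rewrite -{2}(sqrCK dl0) sqrtC_addr_le.
apply: (le_trans (ler_pM _ _ (sqrt_shift x x0) (sqrt_shift y y0)));
  rewrite ?sqrtC_ge0 ?addr_ge0 //.
have -> : (sqrtC x + dl) * (sqrtC y + dl)
    = sqrtC x * sqrtC y + dl * (sqrtC x + sqrtC y) + dl ^+ 2 by ring.
by rewrite [in X in _ <= X]mulrDr addrA lerD2l mulr1 expr2 ler_piMr.
Qed.

(* The slack by which S_{a,c}(j,l) can grow, per unit of delta. *)
Definition Sac_slack (q : 'M[C]_4) a c j l : C :=
  \sum_(b : bool) \sum_(i < 2) (sqrtC (q (ix b i) (ix a j)) + sqrtC (q (ix b i) (ix c l)) + 1).

Lemma Sac_slack_ge0 (q : 'M[C]_4) a c j l : (forall i j, 0 <= q i j) ->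
  0 <= Sac_slack q a c j l.
Proof. by move=> q0; do 2!(apply: sumr_ge0 => ? _); rewrite !addr_ge0 ?sqrtC_ge0. Qed.

Lemma Sac_shift_le (q : 'M[C]_4) dl a c j l : (forall i j, 0 <= q i j) ->
  0 <= dl -> dl <= 1 ->
  Sac (q + const_mx (dl ^+ 2)) a c j l <= Sac q a c j l + dl * Sac_slack q a c j l.
Proof.
move=> q0 dl0 dl1; set f := fun (r : 'M[C]_4) b =>
  \sum_(i < 2) sqrtC (r (ix b i) (ix a j)) * sqrtC (r (ix b i) (ix c l)).
have qe0 i j0 : 0 <= (q + const_mx (dl ^+ 2)) i j0 by rewrite !mxE addr_ge0 ?exprn_ge0.
have f_real (r : 'M[C]_4) (b : bool) : (forall i j, 0 <= r i j) -> f r b \is Num.real.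
  by move=> r0; rewrite ger0_real ?Sac_term_ge0.
have f_shift b : f (q + const_mx (dl ^+ 2)) b <= f q b + dl * Sac_slack q a c j l.
  apply: (le_trans (y := f q b + dl * \sum_(i < 2)
    (sqrtC (q (ix b i) (ix a j)) + sqrtC (q (ix b i) (ix c l)) + 1))).
    rewrite /f mulr_sumr -big_split; apply: ler_sum => i _; rewrite !mxE.
    exact: sqrtC_prod_shift_le.
  rewrite lerD2l ler_wpM2l // /Sac_slack big_bool /=.
  by case: b; rewrite ?lerDl ?lerDr; do ?(apply: sumr_ge0 => ? _); rewrite !addr_ge0 ?sqrtC_ge0.
have slack_real : dl * Sac_slack q a c j l \is Num.real.
  by rewrite ger0_real ?mulr_ge0 ?Sac_slack_ge0.
rewrite /Sac /= -/(f _ false) -/(f _ true) real_addr_minl ?f_real //.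
by rewrite comparable_le_min2 ?real_comparable ?realD ?f_real ?f_shift.
Qed.

Lemma Sac_sum_shift_le (q : 'M[C]_4) dl a c : (forall i j, 0 <= q i j) ->
  0 <= dl -> dl <= 1 ->
  Sac_sum (q + const_mx (dl ^+ 2)) a c
    <= Sac_sum q a c + dl * \sum_(j < 2) \sum_(l < 2) Sac_slack q a c j l.
Proof.
move=> q0 dl0 dl1; rewrite /Sac_sum mulr_sumr -big_split; apply: ler_sum => j _.
by rewrite mulr_sumr -big_split; apply: ler_sum => l _; apply: Sac_shift_le.
Qed.

End SacShift.

Lemma diag_block_sum_shift_le (C : numClosedFieldType) (q : 'M[C]_4) e d : 0 <= e ->
  diag_block_sum q d <= diag_block_sum (q + const_mx e) d.
Proof. by move=> e0; do 2!(apply: ler_sum => ? _); rewrite !mxE lerDl. Qed.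

Theorem theorem6p10 (C : numClosedFieldType) (q : 'M[C]_4) :
  maxpos q ->
  forall d a c : bool,
    \sum_(i < 2) \sum_(j < 2) q (ix d i) (ix d j)
      <= \sum_(j < 2) \sum_(k < 2) Sac q a c j k.
Proof.
move=> hq d a c; rewrite -/(diag_block_sum q d) -/(Sac_sum q a c).
have q0 := maxpos_ge0 hq.
have lhs0 : 0 <= diag_block_sum q d by do 2!(apply: sumr_ge0 => ? _).
have K0 : 0 <= \sum_(j < 2) \sum_(l < 2) Sac_slack q a c j l.
  by do 2!(apply: sumr_ge0 => ? _); apply: Sac_slack_ge0.
apply: (le_of_le_sub_eps (ger0_real lhs0) (ger0_real (Sac_sum_ge0 a c q0)) K0).
move=> dl dl0 dl1; rewrite lerBlDr.
have dl20 : 0 < dl ^+ 2 by rewrite exprn_gt0.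
apply: (le_trans (diag_block_sum_shift_le q d (ltW dl20))).
apply: (le_trans (maxpos_shift_bound hq dl20 d a c)).
exact: Sac_sum_shift_le (ltW dl0) dl1.
Qed.
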